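(* Let $(X,\le)$ be a partially ordered set in which every two elements have a supremum (join). Then: (a) for every directed $D\subset X$ the set $(\downarrow D)^\uparrow$ is directed, where for $A\subset X$, $A^\uparrow$ is the set of suprema of those directed subsets of $A$ that have a supremum in $X$; consequently $\widehat D$ is directed for every directed $D\subset X$; (b) the enhanced directed completion $\overline X_o$ of $X$ is a complete lattice; (c) the collection $\overline X^{\sf j}$ of all $A\subset X$ which are lower sets and contain the supremum of every subset of $A$ having a supremum in $X$ coincides with the collection $\{A\subset X: A=\widehat A,\ A\text{ directed}\}$ if $X$ has a minimum, and with this collection together with the empty set if $X$ has no minimum. In particular $\overline X^{\sf j}$ ordered by inclusion, with the map $x\mapsto\downarrow x$, is (order-isomorphic to) the enhanced directed completion of $X$.
   Context: Let $(X,\le)$ be a partially ordered set. A subset $D\subset X$ is directed if every finite subset of $D$ (including the empty one) has an upper bound in $D$; in particular directed sets are nonempty. $A\subset X$ is a lower set if $x\in A$ and $y\le x$ imply $y\in A$; $\downarrow A:=\{x\in X:x\le a\text{ for some }a\in A\}$ and $\downarrow x:=\downarrow\{x\}$. $(X,\le)$ is a directed complete partial order (dcpo) if every directed subset has a supremum. A subset $A\subset X$ is directed-sup-closed if the supremum of every directed $D\subset A$ which has a supremum in $X$ belongs to $A$. For $A\subset X$, $\widehat A$ is the smallest subset of $X$ containing $A$ which is both a lower set and directed-sup-closed. A map $T:X_1\to X_2$ between partially ordered sets has the Monotone Convergence Property (Mcp) if for every directed $D\subset X_1$ having a supremum, $T(D)$ has a supremum and $T(\sup D)=\sup T(D)$.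 A directed completion of $(X,\le)$ is a dcpo $(\overline X,\bar\le)$ together with a map $\iota:X\to\overline X$ with the Mcp such that for every dcpo $Z$ and every map $T:X\to Z$ with the Mcp there is a unique map $\bar T:\overline X\to Z$ with the Mcp satisfying $\bar T\circ\iota=T$. The enhanced directed completion $\overline X_o$ is $\overline X$ if $X$ has a minimum, and otherwise $\overline X$ with one new element added which is declared smaller than all others. A complete lattice is a partially ordered set in which every subset has a supremum and an infimum. *)

From Stdlib Require Import List.

Section PosetDefs.
Variable X : Type.
Variable le : X -> X -> Prop.

Definition is_poset : Prop :=
  (forall x, le x x) /\
  (forall x y, le x y -> le y x -> x = y) /\
  (forall x y z, le x y -> le y z -> le x z).

Definition subset (A B : X -> Prop) : Prop := forall x, A x -> B x.
Definition set_eq (A B : X -> Prop) : Prop := forall x, A x <-> B x.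

Definition is_sup (S : X -> Prop) (s : X) : Prop :=
  (forall x, S x -> le x s) /\ (forall u, (forall x, S x -> le x u) -> le s u).

Definition is_inf (S : X -> Prop) (s : X) : Prop :=
  (forall x, S x -> le s x) /\ (forall u, (forall x, S x -> le u x) -> le u s).

Definition directed (D : X -> Prop) : Prop :=
  forall l : list X, (forall x, In x l -> D x) ->
    exists u, D u /\ forall x, In x l -> le x u.

Definition lower_set (A : X -> Prop) : Prop :=
  forall x y, A x -> le y x -> A y.

Definition down (A : X -> Prop) : X -> Prop :=
  fun x => exists a, A a /\ le x a.

Definition down1 (a : X) : X -> Prop := fun x => le x a.

Definition dcpo : Prop :=
  is_poset /\ forall D, directed D -> exists s, is_sup D s.

Definition dsup_closed (A : X -> Prop) : Prop :=
  forall D s, subset D A -> directed D -> is_sup D s -> A s.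

Definition hat (A : X -> Prop) : X -> Prop :=
  fun x => forall B, subset A B -> lower_set B -> dsup_closed B -> B x.

Definition up (A : X -> Prop) : X -> Prop :=
  fun s => exists D, subset D A /\ directed D /\ is_sup D s.

Definition has_min : Prop := exists m, forall x, le m x.

Definition has_binary_sups : Prop :=
  forall a b, exists s, is_sup (fun z => z = a \/ z = b) s.

Definition complete_lattice : Prop :=
  is_poset /\ forall S : X -> Prop, (exists s, is_sup S s) /\ (exists i, is_inf S i).

Definition Xj (A : X -> Prop) : Prop :=
  lower_set A /\ forall S s, subset S A -> is_sup S s -> A s.

End PosetDefs.

Arguments subset {X}. Arguments set_eq {X}.

Definition image {X Z : Type} (T : X -> Z) (D : X -> Prop) : Z -> Prop :=
  fun z => exists d, D d /\ z = T d.

Definition Mcp {X Z : Type} (leX : X -> X -> Prop) (leZ : Z -> Z -> Prop)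
  (T : X -> Z) : Prop :=
  forall D s, directed X leX D -> is_sup X leX D s ->
    is_sup Z leZ (image T D) (T s).

Definition is_directed_completion {X Y : Type} (leX : X -> X -> Prop)
  (leY : Y -> Y -> Prop) (iota : X -> Y) : Prop :=
  dcpo Y leY /\ Mcp leX leY iota /\
  forall (Z : Type) (leZ : Z -> Z -> Prop), dcpo Z leZ ->
    forall T : X -> Z, Mcp leX leZ T ->
      exists Tb : Y -> Z, Mcp leY leZ Tb /\ (forall x, Tb (iota x) = T x) /\
        forall Tb' : Y -> Z, Mcp leY leZ Tb' -> (forall x, Tb' (iota x) = T x) ->
          forall y, Tb' y = Tb y.

(* order on Y with a new bottom element None adjoined *)
Definition enh_le {Y : Type} (leY : Y -> Y -> Prop) (a b : option Y) : Prop :=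
  match a, b with
  | None, _ => True
  | Some _, None => False
  | Some a', Some b' => leY a' b'
  end.

Definition iso_onto_Xj {X W : Type} (leX : X -> X -> Prop) (leW : W -> W -> Prop)
  (j : X -> W) (phi : W -> X -> Prop) : Prop :=
  (forall w, Xj X leX (phi w)) /\
  (forall A, Xj X leX A -> exists w, set_eq (phi w) A) /\
  (forall a b, leW a b <-> subset (phi a) (phi b)) /\
  (forall x, set_eq (phi (j x)) (down1 X leX x)).

(* With binary joins, if E1 and E2 are directed with sups s1 and s2, the joins e1 \/ e2 form a
   directed set with sup s1 \/ s2.  This gives (a) for (\downarrow D)^\uparrow directly, and for
   hat D it shows that, for fixed x, the y with x \/ y in hat D form a lower,
   directed-sup-closed set; two rounds of minimality of hat D then close it under binary joins.
   For (c), the sup of any subset S of a directed A = hat A is the directed sup of the finite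
   joins of S, all of which lie in A.  The nonempty members of Xj, ordered by inclusion, form a
   dcpo into which x |-> \downarrow x has the Mcp, and universality makes every directed
   completion isomorphic to it; as Xj is closed under arbitrary intersections, it is a complete
   lattice, the empty member (present exactly when X has no minimum) being the added bottom. *)

From Stdlib Require Import List Classical FunctionalExtensionality PropExtensionality
  ProofIrrelevance IndefiniteDescription.

Definition doubleton {X : Type} (a b : X) : X -> Prop := fun z => z = a \/ z = b.

Definition bigcap {X : Type} (P : (X -> Prop) -> Prop) : X -> Prop :=
  fun x => forall B, P B -> B x.

Section Poset.
Context {X : Type} {le : X -> X -> Prop} (Hpo : is_poset X le).

Lemma le_refl x : le x x.
Proof. exact (proj1 Hpo x). Qed.

Lemma le_antisym x y : le x y -> le y x -> x = y.
Proof. exact (proj1 (proj2 Hpo) x y). Qed.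

Lemma le_trans x y z : le x y -> le y z -> le x z.
Proof. exact (proj2 (proj2 Hpo) x y z). Qed.

Lemma is_sup_unique {S s t} : is_sup X le S s -> is_sup X le S t -> s = t.
Proof. intros [Hs1 Hs2] [Ht1 Ht2]. apply le_antisym; auto. Qed.

Lemma is_sup_ext S S' s : set_eq S S' -> is_sup X le S s -> is_sup X le S' s.
Proof.
  intros E [Hub Hleast]. split.
  - intros x Hx. apply Hub, E, Hx.
  - intros u Hu. apply Hleast. intros x Hx. apply Hu, E, Hx.
Qed.

Lemma directed_inhabited {D} : directed X le D -> exists d, D d.
Proof. intros HD. destruct (HD nil) as [u [Hu _]]; [intros x []|eauto]. Qed.

Lemma directed_ub2 {D a b} :
  directed X le D -> D a -> D b -> exists c, D c /\ le a c /\ le b c.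
Proof.
  intros HD Ha Hb. destruct (HD (a :: b :: nil)) as [u [Hu Hub]].
  - intros x [<-|[<-|[]]]; auto.
  - exists u. split; [|split]; auto; apply Hub; simpl; auto.
Qed.

Lemma directed_intro D :
  (exists d, D d) -> (forall a b, D a -> D b -> exists c, D c /\ le a c /\ le b c) ->
  directed X le D.
Proof.
  intros [d Hd] Hub2 l. induction l as [|a l IH]; intros Hl.
  - exists d. split; [auto|intros x []].
  - destruct IH as [u [Hu Hul]]; [intros x Hx; apply Hl; simpl; auto|].
    destruct (Hub2 a u) as [c [Hc [Hac Huc]]]; [apply Hl; simpl; auto|auto|].
    exists c. split; auto. intros x [<-|Hx]; eauto using le_trans.
Qed.

Lemma directed_doubleton_le a b : le a b -> directed X le (doubleton a b).
Proof.
  intros Hab. apply directed_intro; [exists a; left; auto|].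
  intros x y Hx Hy. exists b. split; [right; auto|].
  destruct Hx as [->| ->], Hy as [->| ->]; auto using le_refl.
Qed.

Lemma is_sup_doubleton_le a b : le a b -> is_sup X le (doubleton a b) b.
Proof.
  intros Hab. split; [intros z [->| ->]; auto using le_refl|].
  intros u Hu. apply Hu. right; auto.
Qed.

Lemma directed_singleton x : directed X le (fun z => z = x).
Proof.
  apply directed_intro; [eauto|]. intros a b -> ->. exists x. auto using le_refl.
Qed.

Lemma is_sup_singleton x : is_sup X le (fun z => z = x) x.
Proof. split; [intros z ->; apply le_refl|intros u Hu; auto]. Qed.

Lemma is_sup_list1 x : is_sup X le (fun z => In z (x :: nil)) x.
Proof.
  apply (is_sup_ext (fun z => z = x)); [|apply is_sup_singleton].
  intros z. simpl. intuition.
Qed.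

Lemma hat_incl A : subset A (hat X le A).
Proof. intros x Hx B HAB _ _. auto. Qed.

Lemma hat_lower A : lower_set X le (hat X le A).
Proof. intros x y Hx Hyx B HAB HB HBd. apply (HB x); [apply Hx|]; auto. Qed.

Lemma hat_dsup_closed A : dsup_closed X le (hat X le A).
Proof.
  intros D s HDA HD Hs B HAB HB HBd. apply (HBd D s); auto.
  intros x Hx. apply HDA; auto.
Qed.

Lemma hat_smallest A B :
  subset A B -> lower_set X le B -> dsup_closed X le B -> subset (hat X le A) B.
Proof. intros HAB HB HBd x Hx. apply Hx; auto. Qed.

Lemma hat_hat A : set_eq (hat X le (hat X le A)) (hat X le A).
Proof.
  intros x. split; [|apply hat_incl].
  apply hat_smallest; [intros y; auto|apply hat_lower|apply hat_dsup_closed].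
Qed.

End Poset.

Lemma Mcp_monotone {A B : Type} {leA : A -> A -> Prop} {leB : B -> B -> Prop}
  (HA : is_poset A leA) (T : A -> B) :
  Mcp leA leB T -> forall a b, leA a b -> leB (T a) (T b).
Proof.
  intros HT a b Hab.
  apply (proj1 (HT _ _ (directed_doubleton_le HA a b Hab) (is_sup_doubleton_le HA a b Hab))).
  exists a. split; [left|]; auto.
Qed.

Lemma directed_image {A B : Type} {leA : A -> A -> Prop} {leB : B -> B -> Prop}
  (HB : is_poset B leB) (T : A -> B) :
  (forall a b, leA a b -> leB (T a) (T b)) ->
  forall D, directed A leA D -> directed B leB (image T D).
Proof.
  intros Hmono D HD. apply (directed_intro HB).
  - destruct (directed_inhabited HD) as [d Hd]. exists (T d), d; auto.
  - intros x y [a [Ha ->]] [b [Hb ->]].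
    destruct (directed_ub2 HD Ha Hb) as [c [Hc [Hac Hbc]]].
    exists (T c). split; [exists c|]; auto.
Qed.

Lemma Mcp_id {A : Type} (leA : A -> A -> Prop) : Mcp leA leA (fun a => a).
Proof.
  intros D s _ Hs. apply (is_sup_ext D); auto.
  intros x. split; [intros Hx; exists x; auto|intros [d [Hd ->]]; auto].
Qed.

Lemma Mcp_comp {A B C : Type} {leA : A -> A -> Prop} {leB : B -> B -> Prop}
  {leC : C -> C -> Prop} (HA : is_poset A leA) (HB : is_poset B leB) f g :
  Mcp leA leB f -> Mcp leB leC g -> Mcp leA leC (fun a => g (f a)).
Proof.
  intros Hf Hg D s HD Hs.
  assert (Hfd : directed B leB (image f D))
    by exact (directed_image HB f (Mcp_monotone HA f Hf) D HD).
  apply (is_sup_ext (image g (image f D))); [|exact (Hg _ _ Hfd (Hf D s HD Hs))].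
  intros x. split.
  - intros [y [[d [Hd ->]] ->]]. exists d; auto.
  - intros [d [Hd ->]]. exists (f d). split; [exists d|]; auto.
Qed.

Definition is_join {X : Type} (le : X -> X -> Prop) (x y j : X) : Prop :=
  is_sup X le (doubleton x y) j.

Definition joins {X : Type} (le : X -> X -> Prop) (E1 E2 : X -> Prop) : X -> Prop :=
  fun z => exists e1 e2, E1 e1 /\ E2 e2 /\ is_join le e1 e2 z.

Definition join_preimage {X : Type} (le : X -> X -> Prop) (x : X) (P : X -> Prop) :
  X -> Prop := fun y => forall j, is_join le x y j -> P j.

Definition finite_sups {X : Type} (le : X -> X -> Prop) (S : X -> Prop) : X -> Prop :=
  fun z => exists a l, S a /\ (forall x, In x l -> S x) /\
             is_sup X le (fun w => In w (a :: l)) z.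

Definition Xj_ne {X : Type} (le : X -> X -> Prop) (A : X -> Prop) : Prop :=
  Xj X le A /\ exists x, A x.

Section Joins.
Context {X : Type} {le : X -> X -> Prop} (Hpo : is_poset X le)
  (Hjoin : has_binary_sups X le).

Lemma join_ge_l {x y j} : is_join le x y j -> le x j.
Proof. intros [Hub _]. apply Hub. left; auto. Qed.

Lemma join_ge_r {x y j} : is_join le x y j -> le y j.
Proof. intros [Hub _]. apply Hub. right; auto. Qed.

Lemma join_le {x y j u} : is_join le x y j -> le x u -> le y u -> le j u.
Proof. intros [_ Hleast] Hx Hy. apply Hleast. intros z [->| ->]; auto. Qed.

Lemma is_join_sym {x y j} : is_join le x y j -> is_join le y x j.
Proof. apply is_sup_ext. intros z. unfold doubleton. tauto. Qed.

Lemma join_le_join {x y x' y' j j'} :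
  is_join le x y j -> is_join le x' y' j' -> le x x' -> le y y' -> le j j'.
Proof.
  intros Hj Hj' Hx Hy.
  apply (join_le Hj); eapply (le_trans Hpo); eauto using join_ge_l, join_ge_r.
Qed.

Lemma directed_joins E1 E2 :
  directed X le E1 -> directed X le E2 -> directed X le (joins le E1 E2).
Proof.
  intros HE1 HE2. apply (directed_intro Hpo).
  - destruct (directed_inhabited HE1) as [a1 Ha1], (directed_inhabited HE2) as [a2 Ha2].
    destruct (Hjoin a1 a2) as [z Hz]. exists z, a1, a2. auto.
  - intros z z' [e1 [e2 [He1 [He2 Hz]]]] [e1' [e2' [He1' [He2' Hz']]]].
    destruct (directed_ub2 HE1 He1 He1') as [c1 [Hc1 [H11 H12]]].
    destruct (directed_ub2 HE2 He2 He2') as [c2 [Hc2 [H21 H22]]].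
    destruct (Hjoin c1 c2) as [c Hc].
    exists c. split; [exists c1, c2; auto|split; eapply join_le_join; eauto].
Qed.

Lemma is_sup_joins E1 E2 s1 s2 j :
  (exists e1, E1 e1) -> (exists e2, E2 e2) ->
  is_sup X le E1 s1 -> is_sup X le E2 s2 -> is_join le s1 s2 j ->
  is_sup X le (joins le E1 E2) j.
Proof.
  intros [a1 Ha1] [a2 Ha2] [Hub1 Hl1] [Hub2 Hl2] Hj. split.
  - intros z [e1 [e2 [He1 [He2 Hz]]]]. eapply join_le_join; eauto.
  - intros u Hu. apply (join_le Hj).
    + apply Hl1. intros e1 He1. destruct (Hjoin e1 a2) as [z Hz].
      apply (le_trans Hpo _ z); [exact (join_ge_l Hz)|]. apply Hu. exists e1, a2. auto.
    + apply Hl2. intros e2 He2. destruct (Hjoin a1 e2) as [z Hz].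
      apply (le_trans Hpo _ z); [exact (join_ge_r Hz)|]. apply Hu. exists a1, e2. auto.
Qed.

Lemma join_preimage_lower x P : lower_set X le P -> lower_set X le (join_preimage le x P).
Proof.
  intros HP y y' Hy Hy'y j' Hj'. destruct (Hjoin x y) as [j Hj].
  apply (HP j); [apply Hy; auto|]. exact (join_le_join Hj' Hj (le_refl Hpo x) Hy'y).
Qed.

(* The join of [x] with a directed sup is the directed sup of the joins [x \/ e]. *)
Lemma join_preimage_dsup_closed x P :
  dsup_closed X le P -> dsup_closed X le (join_preimage le x P).
Proof.
  intros HP E s HEP HE Hs j Hj.
  apply (HP (joins le (fun z => z = x) E) j).
  - intros z [x' [e [-> [He Hz]]]]. apply (HEP e He). auto.
  - apply directed_joins; auto using directed_singleton.
  - apply (is_sup_joins _ _ x s); eauto using is_sup_singleton, directed_inhabited.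
Qed.

Lemma hat_join_closed D x y j : directed X le D ->
  hat X le D x -> hat X le D y -> is_join le x y j -> hat X le D j.
Proof.
  intros HD.
  assert (Hclosed : forall x, D x ->
                      subset (hat X le D) (join_preimage le x (hat X le D))).
  { intros x' Hx'. apply hat_smallest.
    - intros y' Hy' j' Hj'. destruct (directed_ub2 HD Hx' Hy') as [c [Hc [Hxc Hyc]]].
      apply (hat_lower _ c); [apply hat_incl; auto|]. apply (join_le Hj'); auto.
    - apply join_preimage_lower, hat_lower.
    - apply join_preimage_dsup_closed, hat_dsup_closed. }
  intros Hx Hy Hj.
  assert (Hsub : subset (hat X le D) (join_preimage le y (hat X le D))).
  { apply hat_smallest.
    - intros d Hd j' Hj'. apply (Hclosed d Hd y Hy), is_join_sym, Hj'.
    - apply join_preimage_lower, hat_lower.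
    - apply join_preimage_dsup_closed, hat_dsup_closed. }
  apply (Hsub x Hx), is_join_sym, Hj.
Qed.

Lemma directed_of_joins A : (exists a, A a) ->
  (forall x y j, A x -> A y -> is_join le x y j -> A j) -> directed X le A.
Proof.
  intros Hne Hjoins. apply (directed_intro Hpo A Hne).
  intros a b Ha Hb. destruct (Hjoin a b) as [j Hj].
  exists j. split; [eauto|split; [exact (join_ge_l Hj)|exact (join_ge_r Hj)]].
Qed.

Lemma hat_directed D : directed X le D -> directed X le (hat X le D).
Proof.
  intros HD. apply directed_of_joins.
  - destruct (directed_inhabited HD) as [d Hd]. exists d. apply hat_incl, Hd.
  - intros x y j. apply hat_join_closed, HD.
Qed.

Lemma up_down_directed D : directed X le D -> directed X le (up X le (down X le D)).
Proof.
  intros HD. apply directed_of_joins.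
  - destruct (directed_inhabited HD) as [d Hd]. exists d, (fun z => z = d).
    split; [|split; [apply directed_singleton, Hpo|apply is_sup_singleton, Hpo]].
    intros z ->. exists d. split; [auto|apply le_refl, Hpo].
  - intros s1 s2 j [E1 [HE1 [HD1 Hs1]]] [E2 [HE2 [HD2 Hs2]]] Hj.
    exists (joins le E1 E2).
    split; [|split; [apply directed_joins; auto|
                     apply (is_sup_joins _ _ s1 s2); eauto using directed_inhabited]].
    intros z [e1 [e2 [He1 [He2 Hz]]]].
    destruct (HE1 e1 He1) as [a1 [Ha1 Hea1]], (HE2 e2 He2) as [a2 [Ha2 Hea2]].
    destruct (directed_ub2 HD Ha1 Ha2) as [c [Hc [Hac1 Hac2]]].
    exists c. split; auto. apply (join_le Hz); eapply (le_trans Hpo); eauto.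
Qed.

Lemma Xj_directed A : Xj X le A -> (exists x, A x) -> directed X le A.
Proof.
  intros [_ HA] Hne. apply (directed_of_joins A Hne).
  intros x y j Hx Hy Hj. apply (HA (doubleton x y) j); auto.
  intros z [->| ->]; auto.
Qed.

Lemma Xj_hat_fixed A : Xj X le A -> set_eq A (hat X le A).
Proof.
  intros [HL HA] x. split; [apply hat_incl|].
  apply hat_smallest; auto; [intros y; auto|].
  intros D s HD _ Hs. apply (HA D s HD Hs).
Qed.

Lemma Xj_empty A : ~ has_min X le -> (forall x, ~ A x) -> Xj X le A.
Proof.
  intros Hnomin Hempty. split; [intros x y Hx; destruct (Hempty x Hx)|].
  intros S s HS Hs. exfalso. apply Hnomin. exists s. intros x.
  apply (proj2 Hs). intros z Hz. destruct (Hempty z (HS z Hz)).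
Qed.

Lemma Xj_inhabited A : has_min X le -> Xj X le A -> exists x, A x.
Proof.
  intros [m Hm] [_ HA]. exists m. apply (HA (fun _ => False)); [intros z []|].
  split; [intros z []|intros u _; apply Hm].
Qed.

Lemma Xj_bigcap (P : (X -> Prop) -> Prop) :
  (forall B, P B -> Xj X le B) -> Xj X le (bigcap P).
Proof.
  intros HP. split.
  - intros x y Hx Hyx B HB. apply (proj1 (HP B HB) x); [apply Hx|]; auto.
  - intros S s HS Hs B HB. apply (proj2 (HP B HB) S s); auto.
    intros x Hx. apply HS; auto.
Qed.

Lemma list_sup_exists a l : exists s, is_sup X le (fun z => In z (a :: l)) s.
Proof.
  revert a. induction l as [|b l IH]; intros a.
  - exists a. apply is_sup_list1, Hpo.
  - destruct (IH b) as [t [Htub Htl]], (Hjoin a t) as [j Hj]. exists j. split.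
    + intros z [<-|Hz]; [exact (join_ge_l Hj)|].
      apply (le_trans Hpo _ t); [apply Htub, Hz|exact (join_ge_r Hj)].
    + intros u Hu. apply (join_le Hj); [apply Hu; simpl; auto|].
      apply Htl. intros z Hz. apply Hu. simpl; auto.
Qed.

Lemma finite_sups_directed S : (exists x, S x) -> directed X le (finite_sups le S).
Proof.
  intros [x0 Hx0]. apply (directed_intro Hpo).
  - exists x0, x0, nil. split; [auto|split; [intros x []|]].
    apply is_sup_list1, Hpo.
  - intros z1 z2 [a1 [l1 [Ha1 [Hl1 Hz1]]]] [a2 [l2 [Ha2 [Hl2 Hz2]]]].
    destruct (list_sup_exists a1 (l1 ++ a2 :: l2)) as [t Ht].
    exists t. split; [|split].
    + exists a1, (l1 ++ a2 :: l2). split; [auto|split; [|exact Ht]].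
      intros x Hx. destruct (in_app_or _ _ _ Hx) as [H|[<-|H]]; auto.
    + apply (proj2 Hz1). intros x Hx. apply (proj1 Ht).
      destruct Hx as [<-|Hx]; [left; auto|right; apply in_or_app; auto].
    + apply (proj2 Hz2). intros x Hx. apply (proj1 Ht).
      right. apply in_or_app. right. exact Hx.
Qed.

Lemma is_sup_finite_sups S s : is_sup X le S s -> is_sup X le (finite_sups le S) s.
Proof.
  intros [Hub Hleast]. split.
  - intros z [a [l [Ha [Hl Hz]]]]. apply (proj2 Hz). intros x [<-|Hx]; auto.
  - intros u Hu. apply Hleast. intros x Hx. apply Hu.
    exists x, nil. split; [auto|split; [intros y []|apply is_sup_list1, Hpo]].
Qed.

Lemma finite_sups_subset A S : lower_set X le A -> directed X le A ->
  subset S A -> subset (finite_sups le S) A.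
Proof.
  intros HL HD HSA z [a [l [Ha [Hl Hz]]]].
  destruct (HD (a :: l)) as [u [Hu Hul]]; [intros x [<-|Hx]; auto|].
  apply (HL u); auto. apply (proj2 Hz), Hul.
Qed.

(* An arbitrary sup is the directed sup of the finite ones, which a directed lower set contains. *)
Lemma Xj_of_hat_fixed A : set_eq A (hat X le A) -> directed X le A -> Xj X le A.
Proof.
  intros Hfix HD.
  assert (HL : lower_set X le A).
  { intros x y Hx Hyx. apply Hfix. apply (hat_lower _ x); auto. apply Hfix, Hx. }
  split; auto.
  intros S s HSA Hs. destruct (classic (exists x, S x)) as [HSne|HSempty].
  - apply Hfix, (hat_dsup_closed _ (finite_sups le S) s).
    + intros z Hz. apply hat_incl. exact (finite_sups_subset A S HL HD HSA z Hz).
    + apply finite_sups_directed, HSne.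
    + apply is_sup_finite_sups, Hs.
  - destruct (directed_inhabited HD) as [a Ha]. apply (HL a); auto.
    apply (proj2 Hs). intros x Hx. exfalso. eauto.
Qed.

Lemma Xj_ne_iff A : Xj_ne le A <-> set_eq A (hat X le A) /\ directed X le A.
Proof.
  split.
  - intros [HA Hne]. split; [apply Xj_hat_fixed, HA|apply Xj_directed; auto].
  - intros [Hfix HD]. split; [apply Xj_of_hat_fixed; auto|exact (directed_inhabited HD)].
Qed.

Lemma Xj_iff_of_min A : has_min X le ->
  (Xj X le A <-> set_eq A (hat X le A) /\ directed X le A).
Proof.
  intros Hmin. rewrite <- Xj_ne_iff. split; [|intros [HA _]; exact HA].
  intros HA. split; [exact HA|apply (Xj_inhabited A Hmin HA)].
Qed.

Lemma Xj_iff_of_no_min A : ~ has_min X le ->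
  (Xj X le A <-> (set_eq A (hat X le A) /\ directed X le A) \/ (forall x, ~ A x)).
Proof.
  intros Hnomin. rewrite <- Xj_ne_iff. split.
  - intros HA. destruct (classic (exists x, A x)) as [Hne|Hempty].
    + left. split; assumption.
    + right. intros x Hx. apply Hempty. eauto.
  - intros [[HA _]|Hempty]; [exact HA|apply (Xj_empty A Hnomin Hempty)].
Qed.
End Joins.

(* The sup of S is the intersection of the members of F above every phi v, v in S. *)
Lemma complete_lattice_of_bigcap_closed {W X : Type} {leW : W -> W -> Prop}
  (F : (X -> Prop) -> Prop) (phi : W -> X -> Prop) :
  is_poset W leW -> (forall P, (forall B, P B -> F B) -> F (bigcap P)) ->
  (forall w, F (phi w)) -> (forall A, F A -> exists w, set_eq (phi w) A) ->
  (forall a b, leW a b <-> subset (phi a) (phi b)) -> complete_lattice W leW.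
Proof.
  intros HW Hcap HF Honto Hle. split; auto. intros S. split.
  - destruct (Honto (bigcap (fun B => F B /\ forall v, S v -> subset (phi v) B)))
      as [w Hw]; [apply Hcap; tauto|].
    exists w. split.
    + intros v Hv. apply Hle. intros x Hx. apply Hw. intros B [_ HB]. apply (HB v Hv x Hx).
    + intros u Hu. apply Hle. intros x Hx. apply Hw in Hx. apply Hx.
      split; [apply HF|]. intros v Hv. apply Hle, Hu, Hv.
  - destruct (Honto (bigcap (fun B => exists v, S v /\ B = phi v))) as [w Hw].
    { apply Hcap. intros B [v [_ ->]]. apply HF. }
    exists w. split.
    + intros v Hv. apply Hle. intros x Hx. apply Hw in Hx. apply Hx. eauto.
    + intros u Hu. apply Hle. intros x Hx. apply Hw. intros B [v [Hv ->]].
      apply (proj1 (Hle u v) (Hu v Hv) x Hx).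
Qed.

Definition xj {X : Type} (le : X -> X -> Prop) : Type := {A : X -> Prop | Xj_ne le A}.

Definition xj_le {X : Type} {le : X -> X -> Prop} (a b : xj le) : Prop :=
  subset (proj1_sig a) (proj1_sig b).

Definition xj_union {X : Type} {le : X -> X -> Prop} (DD : xj le -> Prop) : X -> Prop :=
  fun x => exists a, DD a /\ proj1_sig a x.

Section XjDcpo.
Context {X : Type} {le : X -> X -> Prop} (Hpo : is_poset X le)
  (Hjoin : has_binary_sups X le).

Lemma xj_ext (a b : xj le) : set_eq (proj1_sig a) (proj1_sig b) -> a = b.
Proof.
  destruct a as [A HA], b as [B HB]. simpl. intros HAB.
  assert (A = B) as <-
    by (extensionality x; apply propositional_extensionality, HAB).
  f_equal. apply proof_irrelevance.
Qed.

Lemma xj_poset : is_poset (xj le) xj_le.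
Proof.
  split; [intros a x; auto|split].
  - intros a b Hab Hba. apply xj_ext. intros x. split; auto.
  - intros a b c Hab Hbc x Hx. auto.
Qed.

Lemma directed_xj_union DD : directed (xj le) xj_le DD -> directed X le (xj_union DD).
Proof.
  intros HDD. apply (directed_intro Hpo).
  - destruct (directed_inhabited HDD) as [a Ha], (proj2 (proj2_sig a)) as [x Hx].
    exists x, a. auto.
  - intros x y [a [Ha Hx]] [b [Hb Hy]].
    destruct (directed_ub2 HDD Ha Hb) as [c [Hc [Hac Hbc]]].
    destruct (proj2_sig c) as [Hcj Hcne].
    destruct (directed_ub2 (Xj_directed Hpo Hjoin _ Hcj Hcne) (Hac x Hx) (Hbc y Hy))
      as [z [Hz Hxyz]].
    exists z. split; [exists c|]; auto.
Qed.

Lemma xj_directed_sup DD : directed (xj le) xj_le DD ->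
  exists s, is_sup (xj le) xj_le DD s /\ set_eq (proj1_sig s) (hat X le (xj_union DD)).
Proof.
  intros HDD. pose proof (directed_xj_union DD HDD) as HU.
  assert (HP : Xj_ne le (hat X le (xj_union DD))).
  { split.
    - apply (Xj_of_hat_fixed Hpo Hjoin).
      + intros x. symmetry. apply hat_hat.
      + apply (hat_directed Hpo Hjoin), HU.
    - destruct (directed_inhabited HU) as [x Hx]. exists x. apply hat_incl, Hx. }
  exists (exist _ _ HP). split; [split|intros x; simpl; tauto].
  - intros a Ha x Hx. apply hat_incl. exists a. auto.
  - intros u Hu. destruct (proj2_sig u) as [[HL HS] _]. apply hat_smallest; auto.
    + intros x [a [Ha Hx]]. apply (Hu a Ha), Hx.
    + intros D s HD _ Hs. apply (HS D s HD Hs).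
Qed.

Lemma xj_dcpo : dcpo (xj le) xj_le.
Proof.
  split; [exact xj_poset|]. intros DD HDD.
  destruct (xj_directed_sup DD HDD) as [s [Hs _]]. eauto.
Qed.

Lemma Xj_ne_down1 x : Xj_ne le (down1 X le x).
Proof.
  split; [split|exists x; exact (le_refl Hpo x)].
  - intros a b Ha Hba. apply (le_trans Hpo _ a); auto.
  - intros S s HS Hs. apply (proj2 Hs), HS.
Qed.

Definition xj_down1 (x : X) : xj le := exist _ (down1 X le x) (Xj_ne_down1 x).

Lemma Mcp_xj_down1 : Mcp le xj_le xj_down1.
Proof.
  intros D s HD Hs. split.
  - intros a [d [Hd ->]] y Hy. apply (le_trans Hpo _ d); [exact Hy|apply (proj1 Hs), Hd].
  - intros u Hu y Hy. destruct (proj2_sig u) as [[HL HS] _].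
    apply (HL s); [|exact Hy]. apply (HS D s); auto.
    intros d Hd. apply (Hu (xj_down1 d)); [exists d; auto|exact (le_refl Hpo d)].
Qed.

End XjDcpo.

Definition iso_onto_Xj_ne {X W : Type} (le : X -> X -> Prop) (leW : W -> W -> Prop)
  (j : X -> W) (phi : W -> X -> Prop) : Prop :=
  (forall w, Xj_ne le (phi w)) /\
  (forall A, Xj_ne le A -> exists w, set_eq (phi w) A) /\
  (forall a b, leW a b <-> subset (phi a) (phi b)) /\
  (forall x, set_eq (phi (j x)) (down1 X le x)).

Section Universal.
Context {X : Type} {le : X -> X -> Prop} (Hpo : is_poset X le)
  (Hjoin : has_binary_sups X le) {Y : Type} {leY : Y -> Y -> Prop} {iota : X -> Y}
  (Hc : is_directed_completion le leY iota).

Let HY : is_poset Y leY := proj1 (proj1 Hc).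
Let Hiota : Mcp le leY iota := proj1 (proj2 Hc).
Let iota_monotone : forall a b, le a b -> leY (iota a) (iota b) :=
  Mcp_monotone Hpo iota Hiota.

Lemma completion_maps_ext {Z : Type} {leZ : Z -> Z -> Prop} (HZ : dcpo Z leZ)
  (f g : Y -> Z) : Mcp leY leZ f -> Mcp leY leZ g ->
  (forall x, f (iota x) = g (iota x)) -> forall y, f y = g y.
Proof.
  intros Hf Hg Hfg y.
  destruct (proj2 (proj2 Hc) Z leZ HZ (fun x => g (iota x)) (Mcp_comp Hpo HY iota g Hiota Hg))
    as [T [_ [_ Huniq]]].
  rewrite (Huniq f Hf Hfg), (Huniq g Hg (fun x => eq_refl)). reflexivity.
Qed.

Lemma directed_image_xj (a : xj le) : directed Y leY (image iota (proj1_sig a)).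
Proof.
  destruct (proj2_sig a) as [Haj Hane].
  exact (directed_image HY iota iota_monotone _ (Xj_directed Hpo Hjoin _ Haj Hane)).
Qed.

Lemma xj_to_Y_exists (a : xj le) : exists y, is_sup Y leY (image iota (proj1_sig a)) y.
Proof. apply (proj2 (proj1 Hc)), directed_image_xj. Qed.

Definition xj_to_Y (a : xj le) : Y :=
  proj1_sig (constructive_indefinite_description _ (xj_to_Y_exists a)).

Lemma is_sup_xj_to_Y a : is_sup Y leY (image iota (proj1_sig a)) (xj_to_Y a).
Proof. exact (proj2_sig (constructive_indefinite_description _ (xj_to_Y_exists a))). Qed.

Lemma xj_to_Y_monotone a b : xj_le a b -> leY (xj_to_Y a) (xj_to_Y b).
Proof.
  intros Hab. apply (proj2 (is_sup_xj_to_Y a)). intros z [x [Hx ->]].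
  apply (proj1 (is_sup_xj_to_Y b)). exists x. auto.
Qed.

(* A directed sup in [xj] is the hat of the union, and the preimage of [\downarrow u] under
   [iota] is a lower, directed-sup-closed set containing that union. *)
Lemma Mcp_xj_to_Y : Mcp xj_le leY xj_to_Y.
Proof.
  intros DD S HDD HS. destruct (xj_directed_sup Hpo Hjoin DD HDD) as [s [Hs Hshat]].
  rewrite (is_sup_unique xj_poset HS Hs). split.
  - intros z [a [Ha ->]]. apply xj_to_Y_monotone, (proj1 Hs), Ha.
  - intros u Hu. apply (proj2 (is_sup_xj_to_Y s)). intros z [x [Hx ->]].
    apply Hshat in Hx. revert x Hx. apply hat_smallest.
    + intros x [a [Ha Hx]]. apply (le_trans HY _ (xj_to_Y a)); [|apply Hu; exists a; auto].
      apply (proj1 (is_sup_xj_to_Y a)). exists x. auto.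
    + intros x x' Hx Hx'x. apply (le_trans HY _ (iota x)); auto.
    + intros E t HE HdE Ht. apply (proj2 (Hiota E t HdE Ht)).
      intros z [e [He ->]]. apply HE, He.
Qed.

Lemma xj_to_Y_down1 x : xj_to_Y (xj_down1 Hpo x) = iota x.
Proof.
  apply (is_sup_unique HY (is_sup_xj_to_Y _)). split.
  - intros z [w [Hw ->]]. apply iota_monotone, Hw.
  - intros u Hu. apply Hu. exists x. split; [exact (le_refl Hpo x)|auto].
Qed.

Lemma Y_to_xj_exists :
  exists T : Y -> xj le, Mcp leY xj_le T /\ forall x, T (iota x) = xj_down1 Hpo x.
Proof.
  destruct (proj2 (proj2 Hc) _ _ (xj_dcpo Hpo Hjoin) _ (Mcp_xj_down1 Hpo))
    as [T [HT [HTiota _]]].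
  eauto.
Qed.

Definition Y_to_xj (y : Y) : xj le :=
  proj1_sig (constructive_indefinite_description _ Y_to_xj_exists) y.

Lemma Mcp_Y_to_xj : Mcp leY xj_le Y_to_xj.
Proof. exact (proj1 (proj2_sig (constructive_indefinite_description _ Y_to_xj_exists))). Qed.

Lemma Y_to_xj_iota x : Y_to_xj (iota x) = xj_down1 Hpo x.
Proof. exact (proj2 (proj2_sig (constructive_indefinite_description _ Y_to_xj_exists)) x). Qed.

(* Every [a] is the directed sup of the principal sets [\downarrow x], [x] in [a]. *)
Lemma Y_to_xj_to_Y a : Y_to_xj (xj_to_Y a) = a.
Proof.
  pose proof (Mcp_Y_to_xj _ _ (directed_image_xj a) (is_sup_xj_to_Y a)) as Hsup.
  apply (is_sup_unique xj_poset Hsup). split.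
  - intros b [y [[x [Hx ->]] ->]]. rewrite Y_to_xj_iota. intros w Hw.
    apply (proj1 (proj1 (proj2_sig a)) x); auto.
  - intros u Hu x Hx. apply (Hu (xj_down1 Hpo x)); [|exact (le_refl Hpo x)].
    exists (iota x). split; [exists x; auto|symmetry; apply Y_to_xj_iota].
Qed.

Lemma xj_to_Y_to_xj y : xj_to_Y (Y_to_xj y) = y.
Proof.
  apply (completion_maps_ext (proj1 Hc) (fun y => xj_to_Y (Y_to_xj y)) (fun y => y)).
  - exact (Mcp_comp HY xj_poset _ _ Mcp_Y_to_xj Mcp_xj_to_Y).
  - apply Mcp_id.
  - intros x. rewrite Y_to_xj_iota. apply xj_to_Y_down1.
Qed.

Lemma completion_iso_Xj_ne :
  iso_onto_Xj_ne le leY iota (fun y => proj1_sig (Y_to_xj y)).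
Proof.
  split; [|split; [|split]].
  - intros y. exact (proj2_sig (Y_to_xj y)).
  - intros A HA. exists (xj_to_Y (exist _ A HA)). rewrite Y_to_xj_to_Y. intros x. simpl. tauto.
  - intros a b. split.
    + apply (Mcp_monotone HY _ Mcp_Y_to_xj).
    + intros Hab. rewrite <- (xj_to_Y_to_xj a), <- (xj_to_Y_to_xj b).
      apply xj_to_Y_monotone, Hab.
  - intros x. rewrite Y_to_xj_iota. intros y. simpl. tauto.
Qed.

End Universal.

Lemma enh_le_poset {Y : Type} {leY : Y -> Y -> Prop} :
  is_poset Y leY -> is_poset (option Y) (enh_le leY).
Proof.
  intros [Hrefl [Hanti Htrans]]. split; [|split].
  - intros [y|]; simpl; auto.
  - intros [y|] [z|]; simpl; try tauto. intros; f_equal; auto.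
  - intros [y|] [z|] [w|]; simpl; try tauto. eauto.
Qed.

Definition enh_phi {X Y : Type} (phi : Y -> X -> Prop) (o : option Y) : X -> Prop :=
  match o with Some y => phi y | None => fun _ => False end.

Section Representation.
Context {X W : Type} {le : X -> X -> Prop} {leW : W -> W -> Prop} {j : X -> W}
  {phi : W -> X -> Prop}.

Lemma complete_lattice_of_iso_onto_Xj :
  is_poset W leW -> iso_onto_Xj le leW j phi -> complete_lattice W leW.
Proof.
  intros HW [HXj [Honto [Hle _]]].
  exact (complete_lattice_of_bigcap_closed (Xj X le) phi HW Xj_bigcap HXj Honto Hle).
Qed.

Lemma iso_onto_Xj_of_min :
  has_min X le -> iso_onto_Xj_ne le leW j phi -> iso_onto_Xj le leW j phi.
Proof.
  intros Hmin [HXj [Honto Hrest]]. split; [|split; [|exact Hrest]].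
  - intros w. apply HXj.
  - intros A HA. apply Honto. split; [exact HA|apply (Xj_inhabited A Hmin HA)].
Qed.

(* Without a minimum the empty set is in [Xj]; it is the image of the new bottom [None]. *)
Lemma iso_onto_Xj_enh : ~ has_min X le -> iso_onto_Xj_ne le leW j phi ->
  iso_onto_Xj le (enh_le leW) (fun x => Some (j x)) (enh_phi phi).
Proof.
  intros Hnomin [HXj [Honto [Hle Hdown]]]. split; [|split; [|split]].
  - intros [w|]; [apply HXj|apply (Xj_empty _ Hnomin); tauto].
  - intros A HA. destruct (classic (exists x, A x)) as [Hne|Hempty].
    + destruct (Honto A (conj HA Hne)) as [w Hw]. exists (Some w). exact Hw.
    + exists None. intros x. simpl. split; [tauto|intros Hx; apply Hempty; eauto].
  - intros [a|] [b|]; simpl.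
    + apply Hle.
    + split; [tauto|]. intros Hab. destruct (proj2 (HXj a)) as [x Hx]. exact (Hab x Hx).
    + split; [intros _ x []|auto].
    + split; [intros _ x []|auto].
  - exact Hdown.
Qed.

End Representation.

Theorem mainTheorem5 (X : Type) (le : X -> X -> Prop)
  (Hpo : is_poset X le) (Hjoin : has_binary_sups X le) :
  (* (a) *)
  (forall D, directed X le D ->
     directed X le (up X le (down X le D)) /\ directed X le (hat X le D)) /\
  (* (b) *)
  (forall (Y : Type) (leY : Y -> Y -> Prop) (iota : X -> Y),
     is_directed_completion le leY iota ->
     (has_min X le -> complete_lattice Y leY) /\
     (~ has_min X le -> complete_lattice (option Y) (enh_le leY))) /\
  (* (c) *)
  (has_min X le ->
     forall A, Xj X le A <->
       (set_eq A (hat X le A) /\ directed X le A)) /\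
  (~ has_min X le ->
     forall A, Xj X le A <->
       ((set_eq A (hat X le A) /\ directed X le A) \/ (forall x, ~ A x))) /\
  (forall (Y : Type) (leY : Y -> Y -> Prop) (iota : X -> Y),
     is_directed_completion le leY iota ->
     (has_min X le -> exists phi : Y -> X -> Prop, iso_onto_Xj le leY iota phi) /\
     (~ has_min X le -> exists phi : option Y -> X -> Prop,
          iso_onto_Xj le (enh_le leY) (fun x => Some (iota x)) phi)).
Proof.
  split; [|split; [|split; [|split]]].
  - intros D HD. split; [apply up_down_directed|apply hat_directed]; assumption.
  - intros Y leY iota Hc.
    pose proof (completion_iso_Xj_ne Hpo Hjoin Hc) as Hiso.
    pose proof (proj1 (proj1 Hc)) as HY. split.
    + intros Hmin.
      exact (complete_lattice_of_iso_onto_Xj HY (iso_onto_Xj_of_min Hmin Hiso)).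
    + intros Hnomin.
      exact (complete_lattice_of_iso_onto_Xj (enh_le_poset HY)
               (iso_onto_Xj_enh Hnomin Hiso)).
  - intros Hmin A. apply Xj_iff_of_min; assumption.
  - intros Hnomin A. apply Xj_iff_of_no_min; assumption.
  - intros Y leY iota Hc.
    pose proof (completion_iso_Xj_ne Hpo Hjoin Hc) as Hiso. split.
    + intros Hmin. eexists. exact (iso_onto_Xj_of_min Hmin Hiso).
    + intros Hnomin. eexists. exact (iso_onto_Xj_enh Hnomin Hiso).
Qed.
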